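(* Every Alster space is finitely powerfully Hurewicz, i.e., if $X$ is Alster then $X^k$ is Hurewicz for every positive integer $k$.
   Context: A topological space $X$ is Alster if every cover of $X$ by $G_\delta$ subsets of $X$ such that each compact subset of $X$ is included in some member of the cover has a countable subcover. A point-cofinite cover of a space is an infinite open cover such that each point of the space belongs to all but finitely many members of the cover. A space $X$ is Hurewicz if for each sequence $\{\mathcal{U}_n\}_{n<\omega}$ of open covers of $X$, none of which has a finite subcover, there are finite $\mathcal{F}_n\subseteq\mathcal{U}_n$ such that $\{\bigcup\mathcal{F}_n : n<\omega\}$ is a point-cofinite cover of $X$. Finite powers carry the product topology. No separation axioms are assumed. *)

From HB Require Import structures.
From mathcomp Require Import all_boot all_order all_algebra.
From mathcomp Require Import all_classical all_reals all_analysis.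
Set Implicit Arguments. Unset Strict Implicit. Unset Printing Implicit Defensive.
Local Open Scope classical_set_scope.

Definition Gdelta (T : topologicalType) (A : set T) : Prop :=
  exists U : nat -> set T, (forall n, open (U n)) /\ A = \bigcap_n U n.

Definition Alster (T : topologicalType) : Prop :=
  forall C : set (set T),
    (forall G, C G -> Gdelta G) ->
    \bigcup_(G in C) G = setT ->
    (forall K : set T, compact K -> exists2 G, C G & K `<=` G) ->
    exists2 D : set (set T), D `<=` C &
      countable D /\ \bigcup_(G in D) G = setT.

Definition open_cover (T : topologicalType) (U : set (set T)) : Prop :=
  (forall V, U V -> open V) /\ \bigcup_(V in U) V = setT.

Definition has_finite_subcover (T : topologicalType) (U : set (set T)) : Prop :=
  exists2 F : set (set T), F `<=` U & finite_set F /\ \bigcup_(V in F) V = setT.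

Definition point_cofinite_cover (T : topologicalType) (S : set (set T)) : Prop :=
  open_cover S /\ infinite_set S /\
  (forall x : T, finite_set [set V | S V /\ ~ V x]).

Definition Hurewicz (T : topologicalType) : Prop :=
  forall U : nat -> set (set T),
    (forall n, open_cover (U n) /\ ~ has_finite_subcover (U n)) ->
    exists F : nat -> set (set T),
      (forall n, F n `<=` U n /\ finite_set (F n)) /\
      point_cofinite_cover (range (fun n => \bigcup_(V in F n) V)).

Definition power (X : topologicalType) (k : nat) : topologicalType :=
  {ptws 'I_k -> X}.

From mathcomp Require Import all_boot all_order all_algebra.
From mathcomp Require Import all_classical all_reals all_analysis.
From Stdlib Require Cantor.
Set Implicit Arguments. Unset Strict Implicit. Unset Printing Implicit Defensive.
Local Open Scope classical_set_scope.

(* Call h a G_delta hull if it assigns to each compact K a G_delta set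
   h K containing K; in an Alster space countably many hulls h (K_n) cover.
   This property passes to continuous images, and to products: for compact
   K and L, Wallace's tube theorem fits a product of two G_delta sets
   around K x L inside h (K x L); fixing K and covering B by countably many
   of the second factors gives a G_delta set H_K containing K such that
   H_K x B is covered by countably many hulls, and covering A by countably
   many H_K finishes.  Hence all finite powers of an Alster space are
   Alster.  For the Hurewicz property, given open covers U_n without finite
   subcovers, take h K to be the intersection over n of the union of a
   finite F_n(K), a subfamily of U_n covering K; if h (K_j) cover the space,
   the unions of the F_n(K_j) over j <= n form a point-cofinite cover. *)

Lemma choice_in (I T : Type) (t0 : T) (D : set I) (P : I -> T -> Prop) :
  (forall i, D i -> exists x, P i x) -> exists f : I -> T, forall i, D i -> P i (f i).
Proof.
move=> DP; have [f Pf] : {f : I -> T & forall i, D i -> P i (f i)}.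
  apply: (@choice _ _ (fun i x => D i -> P i x)) => i.
  have [/DP [x Px]|nDi] := pselect (D i); first by exists x.
  by exists t0 => /nDi.
by exists f.
Qed.

Lemma countable_nat_range T (D : set T) :
  countable D -> D !=set0 -> exists e : nat -> T, D = range e.
Proof. by move=> /pfcard_geP [-> /set0P/eqP//|/surjfunPex [e ->]]; exists e. Qed.

Lemma compact_finite_subcover (T : topologicalType) (K : set T) (U : set (set T)) :
  compact K -> (forall V, U V -> open V) -> K `<=` \bigcup_(V in U) V ->
  exists2 F, F `<=` U & finite_set F /\ K `<=` \bigcup_(V in F) V.
Proof.
move=> /compact_near_coveringP cK oU KU.
pose finsub := [set F | F `<=` U /\ finite_set F].
pose above F := [set F' | F `<=` F' /\ finsub F'].
have finsub_filter : Filter (filter_from finsub above).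
  apply: filter_from_filter; first by exists set0; split; [|exact: finite_set0].
  move=> F1 F2 [F1U fF1] [F2U fF2]; exists (F1 `|` F2).
    by split; [move=> V [/F1U|/F2U]|rewrite finite_setU].
  by move=> F' [F12F' finF']; split; split=> // V ?; apply: F12F'; [left|right].
have [x Kx|F0 finF0] := cK _ _ (fun F x => (\bigcup_(V in F) V) x) finsub_filter.
  have [V UV Vx] := KU x Kx; exists (V, above [set V]).
    split; first by apply: open_nbhs_nbhs; split=> //; exact: oU.
    by exists [set V] => //; split; [move=> ? ->|exact: finite_set1].
  by move=> [y F] [/= Vy [VF _]]; exists V => //; apply: VF.
by move=> /(_ F0 (conj (@subset_refl _ F0) finF0)); exists F0; case: finF0.
Qed.

Lemma tube_over_compact (A B : topologicalType) (K : set A) (L : set B)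
    (R : set (A * B)) : compact L ->
  (forall y, L y -> exists P M, [/\ open P, K `<=` P, open M, M y & P `*` M `<=` R]) ->
  exists P Q, [/\ open P, K `<=` P, open Q, L `<=` Q & P `*` Q `<=` R].
Proof.
move=> /compact_near_coveringP cL tubeL.
pose nbhsK := [set P | open P /\ K `<=` P].
pose below P := [set P' | nbhsK P' /\ P' `<=` P].
have nbhsK_filter : Filter (filter_from nbhsK below).
  apply: filter_from_filter; first by exists setT; split; [exact: openT|].
  move=> P1 P2 [oP1 KP1] [oP2 KP2]; exists (P1 `&` P2).
    by split; [exact: openI|move=> x Kx; split; [exact: KP1|exact: KP2]].
  by move=> P' [nP' P'P12]; split; split=> // x /P'P12[].
pose tube_at P y := exists2 M, open M /\ M y & P `*` M `<=` R.
have [y Ly|P0 [oP0 KP0]] := cL _ _ tube_at nbhsK_filter.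
  have [P [M [oP KP oM My PMR]]] := tubeL y Ly; exists (M, below P).
    by split; [exact/open_nbhs_nbhs|exists P].
  move=> [y' P'] [/= My' [_ P'P]]; exists M => //.
  by move=> [a b] [/= /P'P Pa Mb]; apply: PMR.
move=> /(_ P0 (conj (conj oP0 KP0) (@subset_refl _ P0))) LP0.
pose Q := \bigcup_(M in [set M | open M /\ P0 `*` M `<=` R]) M.
exists P0, Q; split=> //.
- by apply: bigcup_open => M [].
- by move=> y /LP0 [M [oM My] P0MR]; exists M.
- by move=> [a b] [/= P0a [M [_ P0MR] Mb]]; apply: P0MR.
Qed.

Lemma wallace_tube (A B : topologicalType) (K : set A) (L : set B)
    (U : set (A * B)) : open U -> compact K -> compact L -> K `*` L `<=` U ->
  exists P Q, [/\ open P, K `<=` P, open Q, L `<=` Q & P `*` Q `<=` U].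
Proof.
move=> oU cK cL KLU; apply: tube_over_compact => // y Ly.
have [|Q [P [oQ yQ oP KP QPU]]] :=
  @tube_over_compact B A [set y] K [set q | U (q.2, q.1)] cK; last first.
  by exists P, Q; split=> //; [exact: yQ|move=> [a b] [/= Pa Qb]; exact: (QPU (b, a))].
move=> x Kx; have : nbhs (x, y) U by apply: open_nbhs_nbhs; split=> //; exact: KLU.
move=> [[N1 N2] /= [N1x N2y] N12U].
exists N2°, N1°;
split; [exact: open_interior|by move=> _ ->|exact: open_interior|exact: N1x|].
by move=> [b a] [/= /interior_subset N2b /interior_subset N1a]; exact: (N12U (a, b)).
Qed.

Lemma Gdelta_preimage (A B : topologicalType) (f : A -> B) (G : set B) :
  continuous f -> Gdelta G -> Gdelta (f @^-1` G).
Proof.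
move=> /continuousP cf [U [oU ->]].
by exists (fun n => f @^-1` U n); split; [move=> n; exact: cf|rewrite preimage_bigcap].
Qed.

Lemma Gdelta_bigcap2 (T : topologicalType) (U : nat -> nat -> set T) :
  (forall i n, open (U i n)) -> Gdelta (\bigcap_i \bigcap_n U i n).
Proof.
move=> oU; exists (fun m => U (Cantor.of_nat m).1 (Cantor.of_nat m).2).
split=> //; apply/seteqP; split=> [x Ux m _|x Ux i _ n _]; first exact: Ux.
by have := Ux (Cantor.to_nat (i, n)) I; rewrite Cantor.cancel_of_to.
Qed.

Lemma Gdelta_tube (A B : topologicalType) (K : set A) (L : set B)
    (G : set (A * B)) : Gdelta G -> compact K -> compact L -> K `*` L `<=` G ->
  exists (P : nat -> set A) (Q : nat -> set B), [/\ forall n, open (P n) /\ K `<=` P n,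
    forall n, open (Q n) /\ L `<=` Q n & (\bigcap_n P n) `*` (\bigcap_n Q n) `<=` G].
Proof.
move=> [U [oU ->]] cK cL KLU.
have /choice [PQ tubePQ] : forall n, exists PQ : set A * set B,
    [/\ open PQ.1, K `<=` PQ.1, open PQ.2, L `<=` PQ.2 & PQ.1 `*` PQ.2 `<=` U n].
  move=> n; have [P [Q tubeU]] := wallace_tube (oU n) cK cL (fun p KLp => KLU p KLp n I).
  by exists (P, Q).
exists (fst \o PQ), (snd \o PQ); split=> [n|n|[a b] [/= Pa Qb] n _].
- by case: (tubePQ n).
- by case: (tubePQ n).
- by case: (tubePQ n) => _ _ _ _; apply; split; [exact: Pa|exact: Qb].
Qed.

Definition Gdelta_hull (T : topologicalType) (h : set T -> set T) :=
  forall K, compact K -> Gdelta (h K) /\ K `<=` h K.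

Definition Alster_hulls (T : topologicalType) :=
  forall h : set T -> set T, Gdelta_hull h ->
  exists Ks : nat -> set T, (forall n, compact (Ks n)) /\ forall x, exists n, h (Ks n) x.

Lemma Alster_Alster_hulls (T : topologicalType) : Alster T -> Alster_hulls T.
Proof.
move=> alT h hullh.
have [] := alT (h @` compact).
- by move=> _ [K cK <-]; case: (hullh K cK).
- apply/seteqP; split=> // x _; exists (h [set x]); first exact/imageP/compact_set1.
  by case: (hullh _ (@compact_set1 T x)) => _; apply.
- by move=> K cK; exists (h K); [exact: imageP|case: (hullh K cK)].
move=> D Dh [cD Dcov].
have [[S0 DS0]|noD] := pselect (D !=set0); last first.
  exists (fun=> set0); split=> [n|x]; first exact: compact0.
  have [S DS _] : (\bigcup_(S in D) S) x by rewrite Dcov.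
  by case: noD; exists S.
have [e De] := countable_nat_range cD (ex_intro _ S0 DS0).
have /choice [Ks hKs] : forall n, exists K, compact K /\ h K = e n.
  move=> n; have [K cK <-] : (h @` compact) (e n) by apply: Dh; rewrite De.
  by exists K.
exists Ks; split=> [n|x]; first by case: (hKs n).
have [S DS Sx] : (\bigcup_(S in D) S) x by rewrite Dcov.
by move: DS; rewrite De => -[n _ enS]; exists n; case: (hKs n) => _ ->; rewrite enS.
Qed.

Lemma Alster_hulls_slab (A B : topologicalType) (h : set (A * B) -> set (A * B))
    (K : set A) : Alster_hulls B -> Gdelta_hull h -> compact K ->
  exists (H : set A) (Ls : nat -> set B), [/\ Gdelta H, K `<=` H, forall j, compact (Ls j)
    & forall a b, H a -> exists j, h (K `*` Ls j) (a, b)].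
Proof.
move=> alB hullh cK.
have /(choice_in (fun=> set0, fun=> set0)) [PQ tubePQ] : forall L, compact L ->
    exists PQ : (nat -> set A) * (nat -> set B),
    [/\ forall n, open (PQ.1 n) /\ K `<=` PQ.1 n, forall n, open (PQ.2 n) /\ L `<=` PQ.2 n
      & (\bigcap_n PQ.1 n) `*` (\bigcap_n PQ.2 n) `<=` h (K `*` L)].
  move=> L cL; have [hKL KLh] := hullh _ (compact_setX cK cL).
  by have [P [Q tubeh]] := Gdelta_tube hKL cK cL KLh; exists (P, Q).
have hullQ : Gdelta_hull (fun L => \bigcap_n (PQ L).2 n).
  move=> L cL; have [_ QL _] := tubePQ L cL.
  split; first by exists (PQ L).2; split=> // n; case: (QL n).
  by move=> y Ly n _; case: (QL n) => _; apply.
have [Ls [cLs covB]] := alB _ hullQ.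
exists (\bigcap_j \bigcap_n (PQ (Ls j)).1 n), Ls; split=> //.
- by apply: Gdelta_bigcap2 => j n; case: (tubePQ _ (cLs j)) => PK _ _; case: (PK n).
- by move=> a Ka j _ n _; case: (tubePQ _ (cLs j)) => PK _ _; case: (PK n) => _; apply.
- move=> a b Ha; have [j Qb] := covB b; exists j.
  by case: (tubePQ _ (cLs j)) => _ _; apply; split; [exact: Ha|].
Qed.

Lemma Alster_hulls_prod (A B : topologicalType) :
  Alster_hulls A -> Alster_hulls B -> Alster_hulls (A * B)%type.
Proof.
move=> alA alB h hullh.
have /(choice_in (set0, fun=> set0)) [HL slabHL] : forall K, compact K ->
    exists HL : set A * (nat -> set B), [/\ Gdelta HL.1, K `<=` HL.1,
      forall j, compact (HL.2 j) & forall a b, HL.1 a -> exists j, h (K `*` HL.2 j) (a, b)].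
  move=> K cK; have [H [Ls slab]] := Alster_hulls_slab alB hullh cK.
  by exists (H, Ls).
have [|Ks [cKs covA]] := alA (fun K => (HL K).1).
  by move=> K cK; case: (slabHL K cK).
pose KL i j := Ks i `*` (HL (Ks i)).2 j.
exists (fun m => KL (Cantor.of_nat m).1 (Cantor.of_nat m).2); split=> [m|[a b]].
  by apply: compact_setX => //; case: (slabHL _ (cKs (Cantor.of_nat m).1)).
have [i Ha] := covA a; have [_ _ _ /(_ a b Ha) [j hab]] := slabHL _ (cKs i).
by exists (Cantor.to_nat (i, j)); rewrite Cantor.cancel_of_to.
Qed.

Lemma Alster_hulls_image (A B : topologicalType) (f : A -> B) :
  continuous f -> (forall b, exists a, f a = b) -> Alster_hulls A -> Alster_hulls B.
Proof.
move=> cf fsurj alA h hullh.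
have cfK K : compact K -> compact (f @` K).
  by move=> cK; apply: continuous_compact => //; exact: continuous_subspaceT.
have [|Ks [cKs covA]] := alA (fun K => f @^-1` h (f @` K)).
  move=> K cK; have [hfK fKh] := hullh _ (cfK K cK).
  by split; [exact: Gdelta_preimage|move=> a Ka; apply: fKh; exists a].
exists (fun n => f @` Ks n); split=> [n|b]; first exact: cfK.
by have [a <-] := fsurj b; have [n] := covA a; exists n.
Qed.

Lemma compact_Alster_hulls (T : topologicalType) :
  compact [set: T] -> Alster_hulls T.
Proof.
move=> cT h hullh; exists (fun=> setT); split=> // x; exists 0%N.
by case: (hullh _ cT) => _; apply.
Qed.

Lemma prod_topology_continuous (Z : topologicalType) (I : Type)
    (K : I -> topologicalType) (h : Z -> prod_topology K) :
  (forall i, continuous (fun z => h z i)) -> continuous h.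
Proof.
move=> hc z; apply/cvg_sup => i; move: z.
apply/(@continuousP _ (initial_topology (fun f : prod_topology K => f i))).
by move=> _ [B oB <-]; move/continuousP: (hc i); apply.
Qed.

Definition power_snoc (X : topologicalType) (k : nat) (p : power X k * X) :
  power X k.+1 := fun i => if unlift ord_max i is Some j then p.1 j else p.2.

Lemma power_snoc_continuous (X : topologicalType) (k : nat) :
  continuous (@power_snoc X k).
Proof.
apply: prod_topology_continuous => i; rewrite /power_snoc.
case: (unlift ord_max i) => [j|] p; last exact: cvg_snd.
apply: (@continuous_comp _ _ _ fst (fun f : power X k => f j)); first exact: cvg_fst.
exact: (@proj_continuous _ (fun=> X) j).
Qed.

Lemma power_snoc_surj (X : topologicalType) (k : nat) (f : power X k.+1) :
  exists p, @power_snoc X k p = f.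
Proof.
exists ((fun j => f (lift ord_max j)), f ord_max).
by apply: functional_extensionality_dep => i; rewrite /power_snoc; case: unliftP => [j|] ->.
Qed.

Lemma compact_power0 (X : topologicalType) : compact [set: power X 0].
Proof.
have f0 : power X 0 by case=> m; rewrite ltn0.
suff -> : [set: power X 0] = [set f0] by exact: compact_set1.
by apply/seteqP; split=> // f _; apply: functional_extensionality_dep => -[].
Qed.

Lemma Alster_hulls_power (X : topologicalType) (k : nat) :
  Alster_hulls X -> Alster_hulls (power X k).
Proof.
move=> alX; elim: k => [|k IH]; first exact/compact_Alster_hulls/compact_power0.
apply: (Alster_hulls_image (@power_snoc_continuous X k) (@power_snoc_surj X k)).
exact: Alster_hulls_prod.
Qed.

Lemma point_cofinite_range (T : topologicalType) (W : nat -> set T) :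
  (forall n, open (W n)) -> (forall n, W n <> setT) ->
  (forall x, exists j, forall n, (j <= n)%N -> W n x) ->
  point_cofinite_cover (range W).
Proof.
move=> oW WT evW; split; [split|split].
- by move=> _ [n _ <-].
- by apply/seteqP; split=> // x _; have [j Wx] := evW x; exists (W j); [exists j|exact: Wx].
- move=> finW; apply: infinite_nat.
  (* each fibre of W is bounded: W n misses a point lying in all late W m *)
  suff -> : [set: nat] = \bigcup_(V in range W) W @^-1` [set V].
    apply: bigcup_finite => // _ [n _ <-].
    have [x nWx] : exists x, ~ W n x.
      by apply/existsNP => Wn; apply: (WT n); apply/seteqP; split=> // x _; exact: Wn.
    have [j Wx] := evW x; apply: (@sub_finite_set _ _ `I_j); last exact: finite_II.
    by move=> m /= Wmn; case: (ltnP m j) => // jm; case: nWx; rewrite -Wmn; exact: Wx.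
  by apply/seteqP; split=> // n _; exists (W n).
- move=> x; have [j Wx] := evW x.
  apply: (@sub_finite_set _ _ (W @` `I_j)); last exact/finite_image/finite_II.
  move=> _ [[n _ <-] nWx]; exists n => //=.
  by case: (ltnP n j) => // jn; case: nWx; exact: Wx.
Qed.

Lemma Alster_hulls_Hurewicz (T : topologicalType) : Alster_hulls T -> Hurewicz T.
Proof.
move=> alT U coverU.
have /(choice_in (fun=> set0)) [Fk subFk] : forall K, compact K ->
    exists Fk : nat -> set (set T), forall n,
    [/\ Fk n `<=` U n, finite_set (Fk n) & K `<=` \bigcup_(V in Fk n) V].
  move=> K cK; have /choice [Fk subFk] : forall n, exists F,
      [/\ F `<=` U n, finite_set F & K `<=` \bigcup_(V in F) V].
    move=> n; have [[oU covU] _] := coverU n.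
    have [|F FU [finF KF]] := compact_finite_subcover cK oU; last by exists F.
    by rewrite covU.
  by exists Fk.
have [|Ks [cKs covT]] := alT (fun K => \bigcap_n \bigcup_(V in Fk K n) V).
  move=> K cK; split=> [|x Kx n _]; last by case: (subFk K cK n) => _ _; apply.
  exists (fun n => \bigcup_(V in Fk K n) V); split=> // n.
  have [FU _ _] := subFk K cK n; have [[oU _] _] := coverU n.
  by apply: bigcup_open => V /FU /oU.
pose F n := \bigcup_(j in `I_n.+1) Fk (Ks j) n.
have FU n : F n `<=` U n /\ finite_set (F n).
  split; first by move=> V [j _]; case: (subFk _ (cKs j) n) => FU _ _ /FU.
  apply: bigcup_finite; first exact: finite_II.
  by move=> j _; case: (subFk _ (cKs j) n).
exists F; split=> //; apply: point_cofinite_range => [n|n WnT|x].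
- have [FUn _] := FU n; have [[oU _] _] := coverU n.
  by apply: bigcup_open => V /FUn /oU.
- have [FUn finFn] := FU n; have [_ noFin] := coverU n.
  by apply: noFin; exists (F n).
- have [j Ksx] := covT x; exists j => n jn.
  by have [V FV Vx] := Ksx n I; exists V => //; exists j => //=; rewrite ltnS.
Qed.

Theorem corollary2p4 (X : topologicalType) :
  Alster X -> forall k : nat, (0 < k)%N -> Hurewicz (power X k).
Proof.
move=> alX k _; apply/Alster_hulls_Hurewicz/Alster_hulls_power.
exact: Alster_Alster_hulls.
Qed.
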